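(* Let $G$ be a graph and let $H$ be a triangle-free subgraph of $G$ such that every maximal clique of $H$ is a maximal clique of $G$. Then $p(G) \ge p(H)$.
   Context: All graphs are finite and simple. For an acyclic digraph $D$, the phylogeny graph $P(D)$ is the graph on $V(D)$ in which distinct vertices $u,v$ are adjacent if and only if $(u,v)\in A(D)$, or $(v,u)\in A(D)$, or there is a vertex $w$ with $(u,w),(v,w)\in A(D)$. A phylogeny digraph for a graph $G$ is an acyclic digraph $D$ such that $G$ is an induced subgraph of $P(D)$ and $D$ has no arc from a vertex of $V(D)\setminus V(G)$ to a vertex of $V(G)$. The phylogeny number $p(G)$ is the minimum of $|V(D)\setminus V(G)|$ over all phylogeny digraphs $D$ for $G$. *)

From Stdlib Require Import ClassicalEpsilon.
From mathcomp Require Import all_boot.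
Set Implicit Arguments. Unset Strict Implicit. Unset Printing Implicit Defensive.

Definition simple_graph (V : finType) (e : rel V) : Prop :=
  symmetric e /\ irreflexive e.

Definition is_clique (V : finType) (e : rel V) (K : {set V}) : bool :=
  [forall x in K, forall y in K, (x != y) ==> e x y].

Definition maximal_clique (V : finType) (e : rel V) (K : {set V}) : bool :=
  maxset (is_clique e) K.

Definition triangle_free (V : finType) (e : rel V) : Prop :=
  forall x y z : V, ~ [&& e x y, e y z & e x z].

Definition arc (T : finType) (a : {ffun T * T -> bool}) : rel T :=
  fun u v => a (u, v).

Definition acyclic (T : finType) (a : {ffun T * T -> bool}) : bool :=
  [forall x, forall y, arc a x y ==> ~~ connect (arc a) y x].

Definition phylo_adj (T : finType) (a : {ffun T * T -> bool}) (u v : T) : bool :=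
  (u != v) && [|| arc a u v, arc a v u | [exists w, arc a u w && arc a v w]].

(* D, on vertex set V(G) + {k new vertices} (= V + 'I_k, V(G) embedded by inl),
   is a phylogeny digraph for G = (V,e). *)
Definition is_phylogeny_digraph (V : finType) (e : rel V) (k : nat)
    (a : {ffun (V + 'I_k)%type * (V + 'I_k)%type -> bool}) : bool :=
  [&& acyclic a,
 [forall u : V, forall v : V, phylo_adj a (inl u) (inl v) == e u v]
    & [forall i : 'I_k, forall u : V, ~~ arc a (inr i) (inl u)]].

Definition has_phylogeny_digraph (V : finType) (e : rel V) (k : nat) : bool :=
  [exists a : {ffun (V + 'I_k)%type * (V + 'I_k)%type -> bool},
     @is_phylogeny_digraph V e k a].

(* p(G): the least k such that G has a phylogeny digraph with k new vertices
   (such a k always exists for a simple graph; the 0 branch is never used then). *)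
Definition phylogeny_number (V : finType) (e : rel V) : nat :=
  match excluded_middle_informative (exists k, has_phylogeny_digraph e k) with
  | left h => ex_minn h
  | right _ => 0
  end.

From Pilot Require Import Defs.
From Stdlib Require Import ClassicalEpsilon.
From mathcomp Require Import all_boot.
Set Implicit Arguments. Unset Strict Implicit.

(* Since H is triangle-free, every edge xy of H is a maximal clique of H, so
   {f x, f y} is a maximal clique of G: no vertex of G is adjacent to both f x
   and f y.  Take a phylogeny digraph D for G and keep only the arcs x -> y
   along H-edges and the arcs x -> w into new vertices w all of whose other
   in-neighbours from H are H-neighbours of x.  By the observation above, a
   common out-neighbour of the ends of an H-edge is a new vertex receiving no
   other arc from H, so both arcs survive; hence the result is a phylogeny
   digraph for H with the same new vertices, and p(H) <= p(G). *)

Lemma is_cliqueP (V : finType) (e : rel V) (K : {set V}) :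
  reflect {in K &, forall x y, x != y -> e x y} (is_clique e K).
Proof.
apply: (iffP forall_inP) => [Kcl x y xK yK | Kcl x xK].
- by move/forall_inP/(_ y yK)/implyP: (Kcl x xK).
- by apply/forall_inP => y yK; apply/implyP; apply: Kcl.
Qed.

Section Cliques.
Variables (V : finType) (e : rel V).
Hypothesis e_sym : symmetric e.

Lemma clique_set2 x y : e x y -> is_clique e [set x; y].
Proof.
move=> exy; apply/is_cliqueP => u v; rewrite !inE.
by case/orP=> /eqP-> /orP[]/eqP->; rewrite ?eqxx // e_sym.
Qed.

Lemma clique_setU1 v (K : {set V}) :
  {in K, forall x, e v x} -> is_clique e K -> is_clique e (v |: K).
Proof.
move=> vK /is_cliqueP Kcl; apply/is_cliqueP => x y; rewrite !inE.
case/predU1P=> [->|xK] /predU1P[->|yK]; rewrite ?eqxx // => xy.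
- exact: vK.
- by rewrite e_sym vK.
- exact: Kcl.
Qed.

Lemma maximal_clique_edge x y :
  triangle_free e -> e x y -> maximal_clique e [set x; y].
Proof.
move=> e_tf exy; apply/maxsetP; split=> [|K /is_cliqueP Kcl xyK].
  exact: clique_set2.
apply/eqP; rewrite eqEsubset xyK andbT.
have xK : x \in K by apply: (subsetP xyK); rewrite !inE eqxx.
have yK : y \in K by apply: (subsetP xyK); rewrite !inE eqxx orbT.
apply/subsetP=> z zK; rewrite !inE; apply/norP=> -[zx zy].
by apply: (e_tf x y z); rewrite exy !Kcl // eq_sym.
Qed.

End Cliques.

Lemma connect_homo (T1 T2 : finType) (e1 : rel T1) (e2 : rel T2) (phi : T1 -> T2) :
  {homo phi : x y / e1 x y >-> e2 x y} ->
  {homo phi : x y / connect e1 x y >-> connect e2 x y}.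
Proof.
move=> phi_e x y /connectP[p p_path ->].
elim: p x p_path => [|z p IHp] x /=; first by rewrite connect0.
by case/andP=> /phi_e xz /IHp; apply: connect_trans; apply: connect1.
Qed.

Lemma acyclic_homo (T1 T2 : finType) (a1 : {ffun T1 * T1 -> bool})
    (a2 : {ffun T2 * T2 -> bool}) (phi : T1 -> T2) :
  {homo phi : x y / Defs.arc a1 x y >-> Defs.arc a2 x y} ->
  acyclic a2 -> acyclic a1.
Proof.
move=> phi_arc /forallP a2_acyc; apply/forallP=> x; apply/forallP=> y.
apply/implyP=> /phi_arc xy; apply: contra (implyP (forallP (a2_acyc _) _) xy).
exact: connect_homo.
Qed.

Lemma acyclic_arc_irrefl (T : finType) (a : {ffun T * T -> bool}) z :
  acyclic a -> ~~ Defs.arc a z z.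
Proof.
move/forallP/(_ z)/forallP/(_ z)/implyP=> a_acyc.
by apply/negP=> /a_acyc; rewrite connect0.
Qed.

Lemma has_phylogeny_digraph_pairs (V : finType) (e : rel V) :
  simple_graph e -> has_phylogeny_digraph e #|{: V * V}|.
Proof.
move=> [e_sym e_irr]; set k := #|{: V * V}|; apply/existsP.
(* One new vertex per ordered edge (x, y), receiving arcs from x and y. *)
exists [ffun p : (V + 'I_k)%type * (V + 'I_k)%type => if p is (inl u, inr i)
  then let q := enum_val i in e q.1 q.2 && ((u == q.1) || (u == q.2)) else false].
apply/and3P; split.
- apply/forallP=> x; apply/forallP=> y; apply/implyP.
  rewrite /Defs.arc ffunE; case: x => [u|i] //; case: y => [v|j] //= _.
  by apply/negP=> /connectP[[|z p] //=]; rewrite /Defs.arc ffunE.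
- apply/forallP=> u; apply/forallP=> v; apply/eqP; apply/idP/idP.
  + case/andP=> uv /or3P[]; rewrite /Defs.arc ?ffunE //.
    case/existsP=> [[z|i]]; rewrite !ffunE //= => /andP[/andP[eq uq] /andP[_ vq]].
    have {}uv : u != v by apply: contra uv => /eqP->.
    by move: uq vq uv; case/orP=> /eqP-> /orP[]/eqP->; rewrite ?eqxx // e_sym.
  + move=> euv; rewrite /phylo_adj.
    have -> : inl u != inl v :> (V + 'I_k)%type.
      by apply: contraTneq euv => -[->]; rewrite e_irr.
    apply/or3P; apply: Or33; apply/existsP; exists (inr (enum_rank (u, v))).
    by rewrite /Defs.arc !ffunE /= enum_rankK /= euv !eqxx orbT.
- by apply/forallP=> i; apply/forallP=> u; rewrite /Defs.arc ffunE.
Qed.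

Lemma phylogeny_number_le (V W : finType) (g : rel V) (h : rel W) :
  (exists k, has_phylogeny_digraph g k) ->
  (forall k, has_phylogeny_digraph g k -> has_phylogeny_digraph h k) ->
  phylogeny_number h <= phylogeny_number g.
Proof.
move=> g_phylo g_to_h; rewrite /phylogeny_number.
case: excluded_middle_informative => [h_phylo|//].
case: excluded_middle_informative => [{}g_phylo|//].
case: ex_minnP => n _ h_min; case: ex_minnP => m g_m _.
exact/h_min/g_to_h.
Qed.

Section PhylogenyDigraph.
Variables (V : finType) (g : rel V) (k : nat).
Variable a : {ffun (V + 'I_k)%type * (V + 'I_k)%type -> bool}.
Hypothesis a_phylo : is_phylogeny_digraph g a.

Lemma phylo_adj_inl u v : phylo_adj a (inl u) (inl v) = g u v.
Proof. by case/and3P: a_phylo => _ /forallP/(_ u)/forallP/(_ v)/eqP. Qed.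

Lemma arc_inl_adj u v : Defs.arc a (inl u) (inl v) -> g u v.
Proof.
move=> uv; rewrite -phylo_adj_inl /phylo_adj uv andbT.
apply: contraTneq uv => ->; apply: acyclic_arc_irrefl.
by case/and3P: a_phylo.
Qed.

Lemma common_out_adj u v z :
  u != v -> Defs.arc a (inl u) z -> Defs.arc a (inl v) z -> g u v.
Proof.
move=> uv uz vz; rewrite -phylo_adj_inl /phylo_adj.
have -> : inl u != inl v :> (V + 'I_k)%type by apply: contra uv => /eqP[->].
by apply/or3P; apply: Or33; apply/existsP; exists z; rewrite uz vz.
Qed.

End PhylogenyDigraph.

Section Restriction.
Variables (V W : finType) (g : rel V) (h : rel W) (f : W -> V).
Hypotheses (g_simple : simple_graph g) (h_simple : simple_graph h).
Hypotheses (f_inj : injective f) (f_hom : forall x y, h x y -> g (f x) (f y)).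
Hypotheses (h_tf : triangle_free h)
  (f_maxcl : forall K, maximal_clique h K -> maximal_clique g (f @: K)).

Lemma edge_no_common_nbr x y v : h x y -> g (f x) v -> g (f y) v -> False.
Proof.
case: g_simple h_simple => [g_sym g_irr] [h_sym _] xy xv yv.
have := f_maxcl (maximal_clique_edge h_sym h_tf xy).
rewrite imsetU1 imset_set1 => /maxsetP[_ /(_ (v |: [set f x; f y]))].
have xyv : {in [set f x; f y], forall u, g v u}.
  by move=> u; rewrite !inE => /orP[]/eqP->; rewrite g_sym.
move=> /(_ (clique_setU1 g_sym xyv (clique_set2 g_sym (f_hom xy))) (subsetUr _ _)).
move/setP/(_ v); rewrite !inE eqxx /= => /esym/orP[]/eqP vE.
- by move: xv; rewrite vE g_irr.
- by move: yv; rewrite vE g_irr.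
Qed.

Variables (k : nat) (a : {ffun (V + 'I_k)%type * (V + 'I_k)%type -> bool}).
Hypothesis a_phylo : is_phylogeny_digraph g a.

Definition restrict_arcs : {ffun (W + 'I_k)%type * (W + 'I_k)%type -> bool} :=
  [ffun p => match p with
   | (inl x, inl y) => h x y && Defs.arc a (inl (f x)) (inl (f y))
   | (inl x, inr w) => Defs.arc a (inl (f x)) (inr w) &&
        [forall x', Defs.arc a (inl (f x')) (inr w) ==> (x' == x) || h x x']
   | _ => false end].

Definition lift_vertex (s : W + 'I_k) : V + 'I_k :=
  match s with inl x => inl (f x) | inr w => inr w end.

Lemma restrict_arc_old x y :
  Defs.arc restrict_arcs (inl x) (inl y) = h x y && Defs.arc a (inl (f x)) (inl (f y)).
Proof. by rewrite /Defs.arc ffunE. Qed.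

Lemma restrict_arc_new x w :
  Defs.arc restrict_arcs (inl x) (inr w) = Defs.arc a (inl (f x)) (inr w) &&
    [forall x', Defs.arc a (inl (f x')) (inr w) ==> (x' == x) || h x x'].
Proof. by rewrite /Defs.arc ffunE. Qed.

Lemma restrict_arc_lift :
  {homo lift_vertex : s t / Defs.arc restrict_arcs s t >-> Defs.arc a s t}.
Proof. by move=> [x|w] [y|w']; rewrite /Defs.arc ffunE //= => /andP[]. Qed.

Lemma restrict_arc_edge x y w : h x y ->
  Defs.arc a (inl (f x)) (inr w) -> Defs.arc a (inl (f y)) (inr w) ->
  Defs.arc restrict_arcs (inl x) (inr w).
Proof.
move=> xy xw yw; rewrite restrict_arc_new xw; apply/forall_inP=> x' /= x'w.
have [//|x'x] := eqVneq x' x.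
have [->|x'y] := eqVneq x' y; first by rewrite xy.
have f_neq z : x' != z -> f z != f x' by rewrite eq_sym; apply: contra => /eqP/f_inj->.
exfalso; apply: (edge_no_common_nbr (v := f x') xy).
- exact: common_out_adj a_phylo _ _ _ (f_neq _ x'x) xw x'w.
- exact: common_out_adj a_phylo _ _ _ (f_neq _ x'y) yw x'w.
Qed.

Lemma restrict_phylo_adj_edge x y :
  h x y -> phylo_adj restrict_arcs (inl x) (inl y).
Proof.
case: h_simple => h_sym h_irr xy.
rewrite /phylo_adj; have -> : inl x != inl y :> (W + 'I_k)%type.
  by apply: contraTneq xy => -[->]; rewrite h_irr.
rewrite /=; have := f_hom xy; rewrite -(phylo_adj_inl a_phylo) => /andP[_] /or3P[].
- by move=> fxy; apply/or3P/Or31; rewrite restrict_arc_old; apply/andP.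
- by move=> fyx; apply/or3P/Or32; rewrite restrict_arc_old h_sym; apply/andP.
case/existsP=> [[v|w] /andP[xv yv]].
  by exfalso; apply: (edge_no_common_nbr (v := v) xy); apply: arc_inl_adj a_phylo _ _ _.
apply/or3P; apply: Or33; apply/existsP; exists (inr w).
by rewrite (restrict_arc_edge xy xv yv) (restrict_arc_edge _ yv xv) // h_sym.
Qed.

Lemma restrict_phylo_adj_sound x y :
  phylo_adj restrict_arcs (inl x) (inl y) -> h x y.
Proof.
case: h_simple g_simple => h_sym _ [g_sym _].
case/andP=> xy /or3P[].
- by rewrite restrict_arc_old => /andP[].
- by rewrite restrict_arc_old h_sym => /andP[].
have {}xy : x != y by apply: contra xy => /eqP->.
case/existsP=> [[z|w] /andP[]].
- rewrite !restrict_arc_old => /andP[xz xz'] /andP[_ yz'].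
  exfalso; apply: (edge_no_common_nbr (v := f y) xz).
  + by apply: common_out_adj a_phylo _ _ _ _ xz' yz'; apply: contra xy => /eqP/f_inj->.
  + by rewrite g_sym; apply: arc_inl_adj a_phylo _ _ _.
- rewrite !restrict_arc_new => /andP[xw _] /andP[_ /forall_inP/(_ x xw)].
  by rewrite (negbTE xy) h_sym.
Qed.

Lemma restrict_phylogeny_digraph : is_phylogeny_digraph h restrict_arcs.
Proof.
apply/and3P; split.
- apply: acyclic_homo restrict_arc_lift _.
  by case/and3P: a_phylo.
- apply/forallP=> x; apply/forallP=> y; apply/eqP; apply/idP/idP.
  + exact: restrict_phylo_adj_sound.
  + exact: restrict_phylo_adj_edge.
- by apply/forallP=> w; apply/forallP=> x; rewrite /Defs.arc ffunE.
Qed.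

End Restriction.

Theorem mainTheorem3 (V W : finType) (g : rel V) (h : rel W) (f : W -> V)
  (HG : simple_graph g) (HH : simple_graph h)
  (f_inj : injective f)
  (f_sub : forall x y : W, h x y -> g (f x) (f y))
  (Htf : triangle_free h)
  (Hcl : forall K : {set W}, maximal_clique h K -> maximal_clique g (f @: K)) :
  phylogeny_number h <= phylogeny_number g.
Proof.
apply: phylogeny_number_le.
  by exists #|{: V * V}|; apply: has_phylogeny_digraph_pairs.
move=> k /existsP[a a_phylo]; apply/existsP; exists (restrict_arcs h f a).
exact: restrict_phylogeny_digraph HG HH f_inj f_sub Htf Hcl _ _ a_phylo.
Qed.
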